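(* Let $\eta\geq 1$ and let $(\phi_n)_{n\in\mathbb N}$ be a family of real univariate polynomials with $\phi_n$ of degree $n$ for every $n$. Let $(\alpha^{m,n}_k)_{k,m,n\in\mathbb N}$ be its linearization coefficients, i.e. the real numbers with $\phi_m\phi_n=\sum_{k=0}^{m+n}\alpha^{m,n}_k\phi_k$ and $\alpha^{m,n}_k=0$ for $k>m+n$, and assume $$\sum_{k=0}^{m+n}\vert\alpha^{m,n}_k\vert = 1\qquad\text{for all } m,n\in\mathbb N.$$ Then for any $x,y\in\ell^1_\eta(\mathbb N,\mathbb C)$, the generalized convolution product $x\ast y$ defined by $(x\ast y)_k=\sum_{m=0}^\infty\sum_{n=0}^\infty x_m y_n\alpha^{m,n}_k$ ($k\in\mathbb N$) is well defined, belongs to $\ell^1_\eta(\mathbb N,\mathbb C)$, and $$\Vert x\ast y\Vert_{\ell^1_\eta}\leq \Vert x\Vert_{\ell^1_\eta}\Vert y\Vert_{\ell^1_\eta};$$ that is, $\ell^1_\eta(\mathbb N,\mathbb C)$ is a Banach algebra for $\ast$.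
   Context: For $\eta\geq1$, $\ell^1_\eta(\mathbb N,\mathbb C)$ denotes the space of complex sequences $x=(x_n)_{n\in\mathbb N}$ with $\Vert x\Vert_{\ell^1_\eta}:=\sum_{n\in\mathbb N}\vert x_n\vert\eta^n<\infty$. *)

From Stdlib Require Import Reals.
From Coquelicot Require Import Coquelicot.
From mathcomp Require Import all_boot all_algebra.
From mathcomp Require Import Rstruct.

Open Scope R_scope.

Definition in_l1_eta (eta : R) (x : nat -> C) : Prop :=
  ex_series (fun n => Cmod (x n) * eta ^ n).

Definition l1_eta_norm (eta : R) (x : nat -> C) : R :=
  Series (fun n => Cmod (x n) * eta ^ n).

Definition is_gen_conv (alpha : nat -> nat -> nat -> R) (x y z : nat -> C) : Prop :=
  forall k : nat, exists w : nat -> C,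
    (forall m : nat,
       is_series (fun n => (x m * y n * RtoC (alpha m n k))%C) (w m))
    /\ is_series w (z k).

(* Because eta >= 1 and alpha^{m,n}_k vanishes for k > m + n, the normalisation
   sum_k |alpha^{m,n}_k| = 1 gives sum_k |alpha^{m,n}_k| eta^k <= eta^(m+n).
   Hence |x_m y_n alpha^{m,n}_k| <= (|x_m| eta^m) (|y_n| eta^n), so every series
   defining x * y converges absolutely, and exchanging a finite sum over k <= N
   with the double series over (m, n) bounds each partial sum of the l^1_eta
   norm of x * y by sum_m sum_n |x_m| eta^m |y_n| eta^n = ||x|| ||y||. *)
From Stdlib Require Import Reals Lra ClassicalEpsilon.
From Coquelicot Require Import Coquelicot.
From mathcomp Require Import all_boot all_algebra.
From mathcomp Require Import Rstruct.

Open Scope R_scope.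

Lemma ex_series_le_nonneg (a b : nat -> R) :
  (forall n, 0 <= a n <= b n) -> ex_series b -> ex_series a.
Proof.
move=> ab; apply: ex_series_le => n.
rewrite /norm /= /abs /= Rabs_pos_eq; apply ab.
Qed.

Lemma Series_nonneg (a : nat -> R) :
  (forall n, 0 <= a n) -> ex_series a -> 0 <= Series a.
Proof.
move=> a_ge0 a_ex; rewrite -(Rmult_0_l (Series a)) -Series_scal_l.
apply: Series_le => // n; rewrite Rmult_0_l; split; [lra | exact: a_ge0].
Qed.

Lemma ex_series_bounded_nonneg (a : nat -> R) (B : R) :
  (forall n, 0 <= a n) -> (forall N, sum_n a N <= B) ->
  ex_series a /\ Series a <= B.
Proof.
move=> a_ge0 a_bnd.
have [l al] : ex_finite_lim_seq (sum_n a).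
  apply: (ex_finite_lim_seq_incr _ B) => // n.
  rewrite sum_Sn /plus /=; have := a_ge0 n.+1; lra.
split; first by exists l.
rewrite (is_series_unique a l al).
exact: (is_lim_seq_le _ _ _ _ a_bnd al (is_lim_seq_const B)).
Qed.

Lemma is_series_sum_n {K : AbsRing} {V : NormedModule K}
    (f : nat -> nat -> V) (l : nat -> V) (N : nat) :
  (forall k, is_series (f k) (l k)) ->
  is_series (fun n => sum_n (fun k => f k n) N) (sum_n l N).
Proof.
move=> fl; elim: N => [|N IH].
- rewrite sum_O; apply: (is_series_ext (f 0%nat)); last exact: fl.
  by move=> n; rewrite sum_O.
- rewrite sum_Sn; apply: is_series_ext (is_series_plus _ _ _ _ IH (fl N.+1)).
  by move=> n; rewrite sum_Sn.
Qed.

Lemma ex_series_sum_n (f : nat -> nat -> R) (N : nat) :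
  (forall k, ex_series (f k)) -> ex_series (fun n => sum_n (fun k => f k n) N).
Proof.
by move=> f_ex; eexists; apply: is_series_sum_n => k; apply: Series_correct.
Qed.

Lemma Series_sum_n (f : nat -> nat -> R) (N : nat) :
  (forall k, ex_series (f k)) ->
  Series (fun n => sum_n (fun k => f k n) N) = sum_n (fun k => Series (f k)) N.
Proof.
by move=> f_ex; apply: is_series_unique; apply: is_series_sum_n => k; apply: Series_correct.
Qed.

Lemma is_series_Cmod_le (a : nat -> C) (b : nat -> R) :
  (forall n, Cmod (a n) <= b n) -> ex_series b ->
  exists l, is_series a l /\ Cmod l <= Series b.
Proof.
move=> ab b_ex.
have [l al] : ex_series a by apply: (ex_series_le (V := C_CompleteNormedModule) _ b).
exists l; split => //.
have Cmod_lim : is_lim_seq (fun N => Cmod (sum_n a N)) (Cmod l).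
  exact: (filterlim_comp _ _ _ _ _ _ _ _ al (filterlim_norm (V := C_NormedModule) l)).
have sum_lim : is_lim_seq (sum_n b) (Series b) := Series_correct _ b_ex.
change (Rbar_le (Cmod l) (Series b)).
apply: (is_lim_seq_le _ _ _ _ _ Cmod_lim sum_lim) => N.
apply: Rle_trans (norm_sum_n_m (V := C_NormedModule) a 0 N) _.
exact: sum_n_m_le.
Qed.

Lemma term_le_sum_f_R0 (f : nat -> R) (k : nat) :
  (forall i, 0 <= f i) -> f k <= sum_f_R0 f k.
Proof.
move=> f_ge0; case: k => [|k] /=; first lra.
have := cond_pos_sum f k f_ge0; lra.
Qed.

Lemma sum_f_R0_le_add (f : nat -> R) (K d : nat) :
  (forall i, 0 <= f i) -> sum_f_R0 f K <= sum_f_R0 f (K + d).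
Proof.
move=> f_ge0; elim: d => [|d IH]; first by rewrite addn0; lra.
rewrite addnS /=; have := f_ge0 (K + d).+1; lra.
Qed.

Lemma sum_f_R0_vanishing_tail (f : nat -> R) (N d : nat) :
  (forall i, (N < i)%N -> f i = 0) -> sum_f_R0 f (N + d) = sum_f_R0 f N.
Proof.
move=> f0; elim: d => [|d IH]; first by rewrite addn0.
by rewrite addnS /= IH f0 ?Rplus_0_r // ltnS leq_addr.
Qed.

Lemma sum_f_R0_le_vanishing (f : nat -> R) (N K : nat) :
  (forall i, 0 <= f i) -> (forall i, (N < i)%N -> f i = 0) ->
  sum_f_R0 f K <= sum_f_R0 f N.
Proof.
move=> f_ge0 f0; case: (leqP K N) => [KN | NK].
- by rewrite -(subnKC KN); apply: sum_f_R0_le_add.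
- rewrite -(subnKC (ltnW NK)) sum_f_R0_vanishing_tail //; lra.
Qed.

Section Normalized_coefficients.

Variable alpha : nat -> nat -> nat -> R.
Hypothesis alpha_vanish : forall m n k, (m + n < k)%N -> alpha m n k = 0.
Hypothesis alpha_abs_sum :
  forall m n, sum_f_R0 (fun k => Rabs (alpha m n k)) (m + n)%N = 1.

Lemma abs_alpha_partial_sum_le1 (m n K : nat) :
  sum_f_R0 (fun k => Rabs (alpha m n k)) K <= 1.
Proof.
rewrite -(alpha_abs_sum m n); apply: sum_f_R0_le_vanishing => [k | k mn_k].
- exact: Rabs_pos.
- by rewrite alpha_vanish // Rabs_R0.
Qed.

Lemma weighted_abs_alpha_sum_le (eta : R) (m n K : nat) :
  1 <= eta -> sum_f_R0 (fun k => Rabs (alpha m n k) * eta ^ k) K <= eta ^ (m + n)%N.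
Proof.
move=> eta_ge1.
apply: (Rle_trans _ (eta ^ (m + n)%N * sum_f_R0 (fun k => Rabs (alpha m n k)) K)).
- rewrite scal_sum; apply: sum_Rle => k _.
  case: (leqP k (m + n)) => [k_le | mn_k].
  + apply: Rmult_le_compat_l; first exact: Rabs_pos.
    by apply: Rle_pow => //; apply/leP.
  + rewrite alpha_vanish // Rabs_R0; lra.
- have := abs_alpha_partial_sum_le1 m n K.
  have := pow_R1_Rle eta (m + n)%N eta_ge1; nra.
Qed.

End Normalized_coefficients.

Section Generalized_convolution.

Variables (eta : R) (alpha : nat -> nat -> nat -> R) (x y : nat -> C).
Hypothesis eta_ge1 : 1 <= eta.
Hypothesis alpha_weighted_sum_le :
  forall m n K, sum_f_R0 (fun k => Rabs (alpha m n k) * eta ^ k) K <= eta ^ (m + n)%N.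
Hypotheses (x_l1 : in_l1_eta eta x) (y_l1 : in_l1_eta eta y).

Definition conv_majorant (k m n : nat) : R :=
  Cmod (x m) * Cmod (y n) * Rabs (alpha m n k).

Lemma eta_pow_ge0 (k : nat) : 0 <= eta ^ k.
Proof. have := pow_R1_Rle eta k eta_ge1; lra. Qed.

Lemma conv_majorant_ge0 (k m n : nat) : 0 <= conv_majorant k m n.
Proof.
apply: Rmult_le_pos; [apply: Rmult_le_pos; apply: Cmod_ge_0 | apply: Rabs_pos].
Qed.

Lemma conv_majorant_le (k m n : nat) :
  conv_majorant k m n <= Cmod (x m) * eta ^ m * (Cmod (y n) * eta ^ n).
Proof.
have alpha_le : Rabs (alpha m n k) <= eta ^ (m + n)%N.
  have := alpha_weighted_sum_le m n k.
  have := term_le_sum_f_R0 (fun i => Rabs (alpha m n i) * eta ^ i) k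
    (fun i => Rmult_le_pos _ _ (Rabs_pos _) (eta_pow_ge0 i)).
  have := pow_R1_Rle eta k eta_ge1; have := Rabs_pos (alpha m n k); simpl; nra.
rewrite pow_add in alpha_le; rewrite /conv_majorant.
replace (Cmod (x m) * eta ^ m * (Cmod (y n) * eta ^ n))
  with (Cmod (x m) * Cmod (y n) * (eta ^ m * eta ^ n)) by ring.
apply: Rmult_le_compat_l => //.
apply: Rmult_le_pos; apply: Cmod_ge_0.
Qed.

Lemma ex_series_conv_majorant (k m : nat) : ex_series (conv_majorant k m).
Proof.
apply: (ex_series_le_nonneg _ (fun n => Cmod (x m) * eta ^ m * (Cmod (y n) * eta ^ n))).
- by move=> n; split; [apply: conv_majorant_ge0 | apply: conv_majorant_le].
- exact: ex_series_scal_l.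
Qed.

Lemma Series_conv_majorant_le (k m : nat) :
  Series (conv_majorant k m) <= Cmod (x m) * eta ^ m * l1_eta_norm eta y.
Proof.
rewrite /l1_eta_norm -Series_scal_l; apply: Series_le; last exact: ex_series_scal_l.
by move=> n; split; [apply: conv_majorant_ge0 | apply: conv_majorant_le].
Qed.

Lemma ex_series_Series_conv_majorant (k : nat) :
  ex_series (fun m => Series (conv_majorant k m)).
Proof.
apply: (ex_series_le_nonneg _ (fun m => Cmod (x m) * eta ^ m * l1_eta_norm eta y)).
- move=> m; split; last exact: Series_conv_majorant_le.
  apply: Series_nonneg; [exact: conv_majorant_ge0 | exact: ex_series_conv_majorant].
- exact: ex_series_scal_r.
Qed.

Lemma gen_conv_exists :
  exists z, is_gen_conv alpha x y z /\
    forall k, Cmod (z k) <= Series (fun m => Series (conv_majorant k m)).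
Proof.
have inner k m : exists w,
    is_series (fun n => (x m * y n * RtoC (alpha m n k))%C) w /\
    Cmod w <= Series (conv_majorant k m).
  apply: is_series_Cmod_le; last exact: ex_series_conv_majorant.
  by move=> n; rewrite !Cmod_mult Cmod_R; apply: Rle_refl.
have outer k : exists zk,
    (exists w, (forall m, is_series (fun n => (x m * y n * RtoC (alpha m n k))%C) (w m))
               /\ is_series w zk) /\
    Cmod zk <= Series (fun m => Series (conv_majorant k m)).
  have [w w_spec] := choice _ (inner k).
  have [zk [w_zk zk_le]] := is_series_Cmod_le w _ (fun m => proj2 (w_spec m))
    (ex_series_Series_conv_majorant k).
  by exists zk; split => //; exists w; split => // m; apply: (proj1 (w_spec m)).
have [z z_spec] := choice _ outer.
by exists z; split => k; [apply: (proj1 (z_spec k)) | apply: (proj2 (z_spec k))].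
Qed.

Lemma weighted_conv_majorant_sum_le (N m n : nat) :
  sum_n (fun k => eta ^ k * conv_majorant k m n) N
  <= Cmod (x m) * eta ^ m * (Cmod (y n) * eta ^ n).
Proof.
rewrite sum_n_Reals.
have -> : sum_f_R0 (fun k => eta ^ k * conv_majorant k m n) N
          = Cmod (x m) * Cmod (y n) * sum_f_R0 (fun k => Rabs (alpha m n k) * eta ^ k) N.
  by rewrite scal_sum; apply: PartSum.sum_eq => k _; rewrite /conv_majorant; ring.
replace (Cmod (x m) * eta ^ m * (Cmod (y n) * eta ^ n))
  with (Cmod (x m) * Cmod (y n) * eta ^ (m + n)%N) by (rewrite pow_add; ring).
apply: Rmult_le_compat_l => //.
apply: Rmult_le_pos; apply: Cmod_ge_0.
Qed.

Lemma conv_majorant_partial_norm_le (N : nat) :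
  sum_n (fun k => eta ^ k * Series (fun m => Series (conv_majorant k m))) N
  <= l1_eta_norm eta x * l1_eta_norm eta y.
Proof.
pose W k m n := eta ^ k * conv_majorant k m n.
have W_ex k m : ex_series (W k m) := ex_series_scal_l _ _ (ex_series_conv_majorant k m).
have W_sum_ge0 m n : 0 <= sum_n (fun k => W k m n) N.
  rewrite sum_n_Reals; apply: cond_pos_sum => k.
  exact: Rmult_le_pos (eta_pow_ge0 k) (conv_majorant_ge0 k m n).
have pull_weight k : eta ^ k * Series (fun m => Series (conv_majorant k m))
                     = Series (fun m => Series (W k m)).
  by rewrite -Series_scal_l; apply: Series_ext => m; rewrite Series_scal_l.
rewrite (sum_n_ext _ _ _ pull_weight) -Series_sum_n; last first.
  move=> k; apply: ex_series_ext (ex_series_scal_l (eta ^ k) _ (ex_series_Series_conv_majorant k)).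
  by move=> m; rewrite /W Series_scal_l.
rewrite (Series_ext _ _ (fun m => esym (Series_sum_n (fun k => W k m) N (W_ex ^~ m)))).
rewrite /l1_eta_norm -Series_scal_r; apply: Series_le; last exact: ex_series_scal_r.
move=> m; split.
- apply: Series_nonneg => //; exact: ex_series_sum_n.
- rewrite -Series_scal_l; apply: Series_le; last exact: ex_series_scal_l.
  by move=> n; split; [apply: W_sum_ge0 | apply: weighted_conv_majorant_sum_le].
Qed.

Lemma gen_conv_l1_eta :
  exists z, is_gen_conv alpha x y z /\ in_l1_eta eta z /\
    l1_eta_norm eta z <= l1_eta_norm eta x * l1_eta_norm eta y.
Proof.
have [z [z_conv z_le]] := gen_conv_exists.
have partial_le N :
    sum_n (fun k => Cmod (z k) * eta ^ k) N <= l1_eta_norm eta x * l1_eta_norm eta y.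
  apply: Rle_trans (conv_majorant_partial_norm_le N); apply: sum_n_m_le => k.
  rewrite Rmult_comm; exact: Rmult_le_compat_l (eta_pow_ge0 k) (z_le k).
have [] := ex_series_bounded_nonneg _ _
  (fun k => Rmult_le_pos _ _ (Cmod_ge_0 _) (eta_pow_ge0 k)) partial_le.
by exists z.
Qed.

End Generalized_convolution.

Theorem lemma2p9 (eta : R) (phi : nat -> {poly R})
  (alpha : nat -> nat -> nat -> R) :
  Rle R1 eta ->
  (forall n : nat, size (phi n) = n.+1) ->
  (forall m n : nat,
     (phi m * phi n)%R = (\sum_(k < (m + n).+1) alpha m n k *: phi k)%R) ->
  (forall m n k : nat, (m + n < k)%N -> alpha m n k = R0) ->
  (forall m n : nat, sum_f_R0 (fun k => Rabs (alpha m n k)) (m + n) = R1) ->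
  forall x y : nat -> C,
    in_l1_eta eta x -> in_l1_eta eta y ->
    exists z : nat -> C,
      is_gen_conv alpha x y z /\
      in_l1_eta eta z /\
      Rle (l1_eta_norm eta z) (Rmult (l1_eta_norm eta x) (l1_eta_norm eta y)).
Proof.
(* The polynomials only determine alpha; the estimate uses nothing but the
   vanishing and the normalisation of the linearization coefficients. *)
move=> eta_ge1 _ _ alpha_vanish alpha_abs_sum x y x_l1 y_l1.
apply: gen_conv_l1_eta => // m n K.
exact: weighted_abs_alpha_sum_le.
Qed.
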